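(* Let $K_1\subset U(N_1)$ and $K_2\subset U(N_2)$ be compact connected subgroups and let $K=K_1\oplus K_2=\{U_1\oplus U_2\mid U_1\in K_1,U_2\in K_2\}\subset U(N_1+N_2)$, where $U_1\oplus U_2=\begin{bmatrix}U_1&0\\0&U_2\end{bmatrix}$. Let $A=A_1\oplus A_2$ and $C=C_1\oplus C_2$ with $A_i,C_i\in\mathbb{C}^{N_i\times N_i}$, $i=1,2$. Then $$W_K(C,A)=W_{K_1}(C_1,A_1)+W_{K_2}(C_2,A_2)$$ (Minkowski sum). In particular, $W_K(C,A)$ is star-shaped (resp. convex) if $W_{K_1}(C_1,A_1)$ and $W_{K_2}(C_2,A_2)$ are star-shaped (resp. convex).
   Context: For a compact connected subgroup $K\subset U(N)$ and $C,A\in\mathbb{C}^{N\times N}$, the relative $C$-numerical range is $W_K(C,A)=\{\mathrm{tr}(C^\dagger UAU^\dagger)\mid U\in K\}\subset\mathbb{C}$. *)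

From HB Require Import structures.
From mathcomp Require Import all_boot all_order all_algebra.
From mathcomp Require Import all_classical all_reals all_analysis.
From mathcomp Require Import complex spectral.
Import Order.TTheory GRing.Theory Num.Theory.
Import numFieldTopology.Exports numFieldNormedType.Exports.
Set Implicit Arguments. Unset Strict Implicit. Unset Printing Implicit Defensive.
Local Open Scope ring_scope.
Local Open Scope classical_set_scope.
Local Open Scope sesquilinear_scope.

(* The usual (norm) topology on C = R[i]. *)
HB.instance Definition _ (R : realType) := PseudoPointedMetric.copy R[i] (R[i])^o.

Definition compact_connected_subgroup (R : realType) (N : nat)
    (K : set 'M[R[i]]_N) : Prop :=
  [/\ (forall U, K U -> U \is unitarymx),
      K 1%:M,
      (forall U V, K U -> K V -> K (U *m V)) &
      (forall U, K U -> K (invmx U))] /\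
  compact K /\ connected K.

Definition relCnumrange (R : realType) (N : nat) (K : set 'M[R[i]]_N)
    (C A : 'M[R[i]]_N) : set R[i] :=
  [set z | exists2 U, K U & z = \tr (C ^t* *m (U *m A *m U ^t*))].

Definition dsum_mx (T : nmodType) (N1 N2 : nat) (X1 : 'M[T]_N1) (X2 : 'M[T]_N2)
  : 'M[T]_(N1 + N2) := block_mx X1 0 0 X2.

Definition dsum_set (T : nmodType) (N1 N2 : nat) (K1 : set 'M[T]_N1)
    (K2 : set 'M[T]_N2) : set 'M[T]_(N1 + N2) :=
  [set U | exists U1, exists U2, [/\ K1 U1, K2 U2 & U = dsum_mx U1 U2]].

Definition minkowski_sum (R : realType) (S1 S2 : set R[i]) : set R[i] :=
  [set z | exists z1, exists z2, [/\ S1 z1, S2 z2 & z = z1 + z2]].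

Definition star_shapedC (R : realType) (S : set R[i]) : Prop :=
  exists2 c, S c & forall z, S z -> forall t : R, 0 <= t <= 1 ->
    S (c + (t%:C)%C * (z - c)).

Definition convexC (R : realType) (S : set R[i]) : Prop :=
  forall x y, S x -> S y -> forall t : R, 0 <= t <= 1 ->
    S ((t%:C)%C * x + ((1 - t)%:C)%C * y).

From HB Require Import structures.
From mathcomp Require Import all_boot all_order all_algebra.
From mathcomp Require Import all_classical all_reals all_analysis.
From mathcomp Require Import complex spectral.
From mathcomp Require Import ring.
Import Order.TTheory GRing.Theory Num.Theory.
Import numFieldTopology.Exports numFieldNormedType.Exports.
Local Open Scope ring_scope.
Local Open Scope classical_set_scope.
Local Open Scope sesquilinear_scope.

(** The conjugation [U A U^*] by a block-diagonal [U] acts blockwise, so the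
trace defining [W_K(C, A)] splits into the traces defining the two summand
ranges.  Star-shapedness and convexity
pass to Minkowski sums, taking the sum of the centres, resp. the same
parameter in both summands. *)

Lemma trmxC_dsum_mx (C : numClosedFieldType) (n1 n2 : nat)
    (X1 : 'M[C]_n1) (X2 : 'M[C]_n2) :
  (dsum_mx X1 X2) ^t* = dsum_mx (X1 ^t*) (X2 ^t*).
Proof. by rewrite /dsum_mx tr_block_mx map_block_mx !linear0 !raddf0. Qed.

Lemma mul_dsum_mx (T : pzRingType) (n1 n2 : nat)
    (X1 Y1 : 'M[T]_n1) (X2 Y2 : 'M[T]_n2) :
  dsum_mx X1 X2 *m dsum_mx Y1 Y2 = dsum_mx (X1 *m Y1) (X2 *m Y2).
Proof. by rewrite /dsum_mx mulmx_block !mulmx0 !mul0mx !addr0 !add0r. Qed.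

Lemma mxtrace_dsum_mx (T : pzRingType) (n1 n2 : nat)
    (X1 : 'M[T]_n1) (X2 : 'M[T]_n2) :
  \tr (dsum_mx X1 X2) = \tr X1 + \tr X2.
Proof. exact: mxtrace_block. Qed.

Lemma relCnumrange_dsum (R : realType) (n1 n2 : nat)
    (K1 : set 'M[R[i]]_n1) (K2 : set 'M[R[i]]_n2)
    (A1 C1 : 'M[R[i]]_n1) (A2 C2 : 'M[R[i]]_n2) :
  relCnumrange (dsum_set K1 K2) (dsum_mx C1 C2) (dsum_mx A1 A2)
  = minkowski_sum (relCnumrange K1 C1 A1) (relCnumrange K2 C2 A2).
Proof.
have trace_split U1 U2 :
    \tr ((dsum_mx C1 C2) ^t* *m (dsum_mx U1 U2 *m dsum_mx A1 A2 *m (dsum_mx U1 U2) ^t*))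
    = \tr (C1 ^t* *m (U1 *m A1 *m U1 ^t*)) + \tr (C2 ^t* *m (U2 *m A2 *m U2 ^t*)).
  by rewrite !trmxC_dsum_mx !mul_dsum_mx mxtrace_dsum_mx.
apply/seteqP; split=> z /=.
- case=> _ [U1 [U2 [KU1 KU2 ->]]] ->.
  by rewrite trace_split; do 2 eexists; split; [exists U1 | exists U2 | ].
- case=> _ [_ [[U1 KU1 ->] [U2 KU2 ->] ->]].
  by exists (dsum_mx U1 U2); [exists U1, U2 | rewrite trace_split].
Qed.

Lemma minkowski_sum_star_shaped (R : realType) (S1 S2 : set R[i]) :
  star_shapedC S1 -> star_shapedC S2 -> star_shapedC (minkowski_sum S1 S2).
Proof.
case=> c1 S1c1 star1 [c2 S2c2 star2].
exists (c1 + c2); first by exists c1, c2.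
move=> _ [z1 [z2 [S1z1 S2z2 ->]]] t t01.
exists (c1 + t%:C%C * (z1 - c1)), (c2 + t%:C%C * (z2 - c2)).
by split; [exact: star1 | exact: star2 | ring].
Qed.

Lemma minkowski_sum_convex (R : realType) (S1 S2 : set R[i]) :
  convexC S1 -> convexC S2 -> convexC (minkowski_sum S1 S2).
Proof.
move=> conv1 conv2 _ _ [x1 [x2 [S1x1 S2x2 ->]]] [y1 [y2 [S1y1 S2y2 ->]]] t t01.
exists (t%:C%C * x1 + (1 - t)%:C%C * y1), (t%:C%C * x2 + (1 - t)%:C%C * y2).
by split; [exact: conv1 | exact: conv2 | ring].
Qed.

Theorem proposition2p8 (R : realType) (N1 N2 : nat)
    (K1 : set 'M[R[i]]_N1) (K2 : set 'M[R[i]]_N2)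
    (A1 C1 : 'M[R[i]]_N1) (A2 C2 : 'M[R[i]]_N2) :
  compact_connected_subgroup K1 ->
  compact_connected_subgroup K2 ->
  [/\ relCnumrange (dsum_set K1 K2) (dsum_mx C1 C2) (dsum_mx A1 A2)
        = minkowski_sum (relCnumrange K1 C1 A1) (relCnumrange K2 C2 A2),
      (star_shapedC (relCnumrange K1 C1 A1) -> star_shapedC (relCnumrange K2 C2 A2) ->
         star_shapedC (relCnumrange (dsum_set K1 K2) (dsum_mx C1 C2) (dsum_mx A1 A2)))
    & (convexC (relCnumrange K1 C1 A1) -> convexC (relCnumrange K2 C2 A2) ->
         convexC (relCnumrange (dsum_set K1 K2) (dsum_mx C1 C2) (dsum_mx A1 A2)))].
Proof.
move=> _ _; rewrite relCnumrange_dsum.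
by split; [| exact: minkowski_sum_star_shaped | exact: minkowski_sum_convex].
Qed.
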